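(* Let $A$ be a setoid, $B$ a setoid family over $A$ and $(C,a_C)$ a $P_B$-algebra. Let $w:W$ and $k,k':\mathsf{ImS}\,w\Rightarrow C$. Then there is a term of type \[ \mathsf{RecDef}\,w\,k\to\mathsf{RecDef}\,w\,k'\to k\approx k'. \]
   Context: Setting: intensional Martin-Löf type theory with $\Pi$-types, record types and a universe $\mathsf U$ closed under $\Pi$ and containing intensional $\Sigma$-types, identity types, unit type, W-types and dependent W-types; propositions-as-types. For a W-type with constructor $\mathsf{sup}$, $\mathsf n,\mathsf b$ are node and branch functions. $\mathsf{DW}_{I,X,Y,d}:I\to\mathsf U$ denotes the dependent W-type: the inductive family with constructor $\mathsf{dsup}\,i\,x\,f:\mathsf{DW}\,i$ for $x:X\,i$ and $f:\prod_{y:Y\,i\,x}\mathsf{DW}(d\,i\,x\,y)$, and the usual dependent eliminator. A setoid $X$: type $X_0:\mathsf U$ with relation $\approx_X$ and proofs of reflexivity, symmetry, transitivity; $x:X$ means $x:X_0$. Extensional function $f:X\Rightarrow Y$: $f_0:X_0\to Y_0$ with a proof that it preserves $\approx$; $X\Rightarrow Y$ is a setoid with pointwise equality; $\circ$ is composition. A setoid family $B$ over setoid $A$: setoids $B\,a$ and transports $B_\alpha:B\,a\Rightarrow B\,a'$ for $\alpha:a\approx_Aa'$, functorial up to $\approx$, with $B_\alpha\approx B_{\alpha'}$ for all $\alpha,\alpha'$. Write $b\approx_\alpha b'$ for $B_\alpha b\approx b'$. $P_BX$: setoid with underlying type $\sum_{a:A}(B\,a\Rightarrow X)$ and $(a,k)\approx(a',k'):=\sum_{\alpha:a\approx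 a'}k\approx k'\circ B_\alpha$. A $P_B$-algebra is a setoid $C$ with extensional $a_C:P_BC\Rightarrow C$. $W$: with $A_0,B_0$ underlying types and $\mathsf W:=\mathsf W(A_0,B_0)$, $\approx^Bw\,w':=\mathsf{DW}_{I,X,Y,d}(w,w')$ with $I:=\mathsf W\times\mathsf W$, $X(w,w'):=\mathsf nw\approx_A\mathsf nw'$, $Y(w,w')\alpha:=\sum_{b,b'}b\approx_\alpha b'$, $d(w,w')\alpha(b,b',\beta):=(\mathsf bwb,\mathsf bw'b')$. $W$: underlying type $\sum_{w:\mathsf W}\approx^Bw\,w$, $(w,\_)\approx_W(w',\_):=\approx^Bw\,w'$. $\mathsf n$, $\mathsf b$ induce extensional $\mathsf n:W\Rightarrow A$ and $\mathsf b\,w:B(\mathsf nw)\Rightarrow W$. $\mathsf{ImS}\,w$ (for $w:W$): setoid with underlying type $B_0(\mathsf nw)$ and $b\approx b':=\mathsf bwb\approx_W\mathsf bwb'$; for $\sigma:s\approx s'$ in $\mathsf{ImS}\,w$, $\mathsf{ImS}_\sigma$ denotes transport $B_{\mathsf n^\ast\sigma}$ along the induced $\mathsf n(\mathsf bws)\approx_A\mathsf n(\mathsf bws')$. $e_w:B(\mathsf nw)\Rightarrow\mathsf{ImS}\,w$ has identity underlying function. A family $F:\prod_{s:\mathsf{ImS}w}\mathsf{ImS}(\mathsf bws)\Rightarrow C$ is coherent if $F\,s\approx(F\,s')\circ\mathsf{ImS}_\sigma$ for all $\sigma:s\approx s'$; $\mathsf{CohMaps}\,w$ is the setoid of coherent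 families with pointwise equality. For $F:\mathsf{CohMaps}\,w$, $\mathsf{recst}\,w\,F:\mathsf{ImS}\,w\Rightarrow C$ is the extensional function $s\mapsto a_C(\mathsf n(\mathsf bws),(F\,s)\circ e_{\mathsf bws})$. For $k:\mathsf{ImS}\,w\Rightarrow C$, $\mathsf{RecDef}\,w\,k:=\mathsf{DW}_{I',X',Y',d'}(w,k)$ with $I':=\sum_{w:W}(\mathsf{ImS}w\Rightarrow C)$, $X'(w,k):=\sum_{F:\mathsf{CohMaps}w}k\approx\mathsf{recst}\,w\,F$, $Y'(w,k)(F,\_):=$ underlying type of $\mathsf{ImS}\,w$, $d'(w,k)(F,\_)s:=(\mathsf bws,F\,s)$. *)

Set Implicit Arguments.
Unset Strict Implicit.

Record setoid := Setoid {
  car :> Type;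
  eqv : car -> car -> Type;
  srefl : forall x, eqv x x;
  ssym : forall x y, eqv x y -> eqv y x;
  strans : forall x y z, eqv x y -> eqv y z -> eqv x z }.
Arguments eqv {_} _ _.
Arguments srefl {_} _.
Arguments ssym {_ _ _} _.
Arguments strans {_ _ _ _} _ _.

Record extfun (X Y : setoid) := ExtFun {
  ap :> X -> Y;
  ext : forall x x' : X, eqv x x' -> eqv (ap x) (ap x') }.
Arguments ext {_ _} _ {_ _} _.

Definition Ext (X Y : setoid) : setoid.
Proof.
  refine (@Setoid (extfun X Y) (fun f g => forall x, eqv (f x) (g x)) _ _ _).
  - intros f x; apply srefl.
  - intros f g h x; apply ssym, h.
  - intros f g h p q x; exact (strans (p x) (q x)).
Defined.

Definition comp (X Y Z : setoid) (g : extfun Y Z) (f : extfun X Y) : extfun X Z :=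
  @ExtFun X Z (fun x => g (f x)) (fun x x' p => ext g (ext f p)).

Record family (A : setoid) := Family {
  fib :> A -> setoid;
  tr : forall a a' : A, eqv a a' -> extfun (fib a) (fib a');
  tr_id : forall (a : A) (b : fib a), eqv (tr (srefl a) b) b;
  tr_comp : forall (a a' a'' : A) (p : eqv a a') (q : eqv a' a'') (b : fib a),
      eqv (tr (strans p q) b) (tr q (tr p b));
  tr_irr : forall (a a' : A) (p q : eqv a a') (b : fib a), eqv (tr p b) (tr q b) }.
Arguments tr {_} _ {_ _} _.
Arguments tr_id {_} _ {_} _.
Arguments tr_comp {_} _ {_ _ _} _ _ _.
Arguments tr_irr {_} _ {_ _} _ _ _.

Section PB.
Context (A : setoid) (B : family A).

Definition PB (X : setoid) : setoid.
Proof.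
  refine (@Setoid {a : A & extfun (B a) X}
    (fun u v => {al : eqv (projT1 u) (projT1 v) &
                 forall b, eqv (projT2 u b) (projT2 v (tr B al b))}) _ _ _).
  - intros [a k]. exists (srefl a). intros b. simpl.
    apply ext, ssym, tr_id.
  - intros [a k] [a' k'] [al h]; simpl in *. exists (ssym al). intros b; simpl.
    apply ssym.
    refine (strans (h _) _).
    refine (strans (ext k' (ssym (tr_comp B _ _ b))) _).
    refine (strans (ext k' (tr_irr B _ (srefl a') b)) _).
    apply ext, tr_id.
  - intros [a k] [a' k'] [a'' k''] [al h] [al' h']; simpl in *.
    exists (strans al al'). intros b; simpl.
    refine (strans (h b) _). refine (strans (h' _) _).
    apply ext, ssym, tr_comp.
Defined.
End PB.

Inductive Wt (A0 : Type) (B0 : A0 -> Type) : Type :=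
  sup : forall a : A0, (B0 a -> Wt B0) -> Wt B0.

Definition Wn A0 (B0 : A0 -> Type) (w : Wt B0) : A0 := match w with @sup _ _ a _ => a end.
Definition Wb A0 (B0 : A0 -> Type) (w : Wt B0) : B0 (Wn w) -> Wt B0 :=
  match w with @sup _ _ _ f => f end.
Arguments Wn {A0 B0} w.
Arguments Wb {A0 B0} w _.

Unset Implicit Arguments.
Inductive DW (I : Type) (X : I -> Type) (Y : forall i, X i -> Type)
    (d : forall i (x : X i), Y i x -> I) : I -> Type :=
  dsup : forall (i : I) (x : X i), (forall y : Y i x, DW I X Y d (d i x y)) -> DW I X Y d i.
Set Implicit Arguments.
Arguments DW {I} X Y d _.
Arguments dsup {I X Y d} i x _.

Definition dnode I X Y d (i : I) (p : @DW I X Y d i) : X i :=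
  match p with @dsup _ _ _ _ _ x _ => x end.
Definition dbr I X Y d (i : I) (p : @DW I X Y d i) :
    forall y : Y i (dnode p), DW X Y d (d i (dnode p) y) :=
  match p as p0 in DW _ _ _ j return forall y : Y j (dnode p0), DW X Y d (d j (dnode p0) y)
  with @dsup _ _ _ _ _ _ f => f end.
Arguments dnode {I X Y d i} p.
Arguments dbr {I X Y d i} p y.

Unset Implicit Arguments.
Section Wsetoid.
Context (A : setoid) (B : family A).

Definition WT := @Wt (car A) (fun a => car (B a)).

Definition WX (i : WT * WT) : Type := eqv (Wn (fst i)) (Wn (snd i)).
Definition WY (i : WT * WT) (al : WX i) : Type :=
  {b : B (Wn (fst i)) & {b' : B (Wn (snd i)) & eqv (tr B al b) b'}}.
Definition Wd (i : WT * WT) (al : WX i) (y : WY i al) : WT * WT :=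
  (Wb (fst i) (projT1 y), Wb (snd i) (projT1 (projT2 y))).

Definition approxB (w w' : WT) : Type := DW WX WY Wd (w, w').

Lemma approxB_sym_gen : forall i, DW WX WY Wd i -> DW WX WY Wd (snd i, fst i).
Proof.
  intros i p; induction p as [i al f IH].
  apply (@dsup _ WX WY Wd (snd i, fst i) (ssym al)).
  intros [b' [b be']]; simpl in *.
  refine (IH (existT _ b (existT _ b' _))).
  refine (strans (ext (tr B al) (ssym be')) _).
  refine (strans (ssym (tr_comp B _ _ b')) _).
  refine (strans (tr_irr B _ (srefl _) b') _).
  apply tr_id.
Qed.

Lemma approxB_trans_gen : forall i, DW WX WY Wd i ->
    forall w'', DW WX WY Wd (snd i, w'') -> DW WX WY Wd (fst i, w'').
Proof.
  intros i p; induction p as [i al f IH]; intros w'' q.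
  apply (@dsup _ WX WY Wd (fst i, w'') (strans al (dnode q))).
  intros [b [b'' ga]]; simpl in *.
  refine (IH (existT _ b (existT _ (tr B al b) (srefl _))) _ _).
  refine (dbr q (existT _ (tr B al b) (existT _ b'' _))).
  exact (strans (ssym (tr_comp B _ _ b)) ga).
Qed.

Definition Wsetoid : setoid.
Proof.
  refine (@Setoid {w : WT & approxB w w} (fun u v => approxB (projT1 u) (projT1 v)) _ _ _).
  - intros [w p]; exact p.
  - intros [w p] [w' p'] q; exact (approxB_sym_gen _ q).
  - intros [w p] [w' p'] [w'' p''] q r; exact (approxB_trans_gen _ q _ r).
Defined.

Definition nW : extfun Wsetoid A :=
  @ExtFun Wsetoid A (fun u => Wn (projT1 u)) (fun u v p => @dnode _ WX WY Wd _ p).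

Lemma tr_self_id (a : A) (al : eqv a a) (b : B a) : eqv (tr B al b) b.
Proof. exact (strans (tr_irr B al (srefl a) b) (tr_id B b)). Qed.

Arguments WX i : clear implicits.
Definition bW_pt (u : Wsetoid) (b : B (nW u)) : Wsetoid :=
  existT _ (Wb (projT1 u) b)
    (dbr (projT2 u) (existT _ b (existT _ b (tr_self_id _ _ b)))).

Definition bW (u : Wsetoid) : extfun (B (nW u)) Wsetoid :=
  @ExtFun (B (nW u)) Wsetoid (bW_pt u)
    (fun b b' be => dbr (projT2 u)
        (existT _ b (existT _ b' (strans (tr_self_id _ _ b) be)))).

Definition ImS (w : Wsetoid) : setoid :=
  @Setoid (car (B (nW w))) (fun s s' => eqv (bW w s) (bW w s'))
    (fun s => srefl _) (fun s s' p => ssym p) (fun s s' s'' p q => strans p q).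

Definition ImS_tr (w : Wsetoid) (s s' : ImS w) (sg : eqv s s') :
    extfun (B (nW (bW w s))) (B (nW (bW w s'))) :=
  tr B (ext nW sg).

Definition e_ (w : Wsetoid) : extfun (B (nW w)) (ImS w) :=
  @ExtFun (B (nW w)) (ImS w) (fun b => b) (fun b b' p => ext (bW w) p).

Section Rec.
Context (C : setoid) (aC : extfun (PB B C) C).

Definition coherent (w : Wsetoid) (F : forall s : ImS w, extfun (ImS (bW w s)) C) : Type :=
  forall (s s' : ImS w) (sg : eqv s s') (t : ImS (bW w s)),
    eqv (F s t) (F s' (ImS_tr w s s' sg t)).

Definition CohMaps (w : Wsetoid) : setoid.
Proof.
  refine (@Setoid {F : forall s : ImS w, extfun (ImS (bW w s)) C & coherent w F}
    (fun F G => forall s : ImS w, @eqv (Ext (ImS (bW w s)) C) (projT1 F s) (projT1 G s))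
    _ _ _).
  - intros F s; apply (srefl (s := Ext _ C)).
  - intros F G p s; apply (ssym (s := Ext _ C)), p.
  - intros F G H p q s; exact (strans (s := Ext _ C) (p s) (q s)).
Defined.

Definition recst_pt (w : Wsetoid) (F : CohMaps w) (s : ImS w) : C :=
  aC (existT _ (nW (bW w s)) (comp (projT1 F s) (e_ (bW w s)))).

Definition recst (w : Wsetoid) (F : CohMaps w) : extfun (ImS w) C.
Proof.
  refine (@ExtFun (ImS w) C (recst_pt w F) _).
  intros s s' sg. unfold recst_pt. apply (ext aC).
  exists (ext nW sg). intros b. exact (projT2 F s s' sg b).
Defined.

Definition I' : Type := {w : Wsetoid & extfun (ImS w) C}.
Definition X' (i : I') : Type :=
  {F : CohMaps (projT1 i) & @eqv (Ext (ImS (projT1 i)) C) (projT2 i) (recst (projT1 i) F)}.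
Definition Y' (i : I') (x : X' i) : Type := car (ImS (projT1 i)).
Definition d' (i : I') (x : X' i) (s : Y' i x) : I' :=
  existT _ (bW (projT1 i) s) (projT1 (projT1 x) s).

Definition RecDef (w : Wsetoid) (k : extfun (ImS w) C) : Type :=
  DW X' Y' d' (existT _ w k).
End Rec.
End Wsetoid.

Arguments Wsetoid {A} B.
Arguments ImS {A B} w.
Arguments RecDef {A B C} aC w k.

(* A derivation of [RecDef w k] exhibits [k] as [recst w F] for a coherent
   family [F] whose components [F s] again have [RecDef] derivations at the
   subtrees [b w s].  By induction on the derivation for [k], the two coherent
   families coming from derivations for [k] and [k'] agree pointwise, and
   [recst] respects that equality. *)

Section RecDefUnique.
Variables (A : setoid) (B : family A) (C : setoid) (aC : extfun (PB B C) C).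

Lemma recst_ext (w : Wsetoid B) (F G : CohMaps A B C w) :
  eqv F G -> @eqv (Ext (ImS w) C) (recst A B C aC w F) (recst A B C aC w G).
Proof.
  intros FG s; simpl; unfold recst_pt.
  apply (ext aC); exists (srefl _); intros b; simpl.
  refine (strans (FG s b) _).
  apply (ext (projT1 G s)); simpl.
  apply (ext (bW A B (bW A B w s))), ssym, tr_id.
Qed.

Lemma RecDef_unique :
  forall i, DW (X' A B C aC) (Y' A B C aC) (d' A B C aC) i ->
  forall k', RecDef aC (projT1 i) k' -> @eqv (Ext (ImS (projT1 i)) C) (projT2 i) k'.
Proof.
  intros i p; induction p as [[w k] [F kF] _ IH]; intros k' q; cbn [projT1 projT2] in *.
  set (F' := projT1 (dnode q)).
  assert (FF' : eqv (s := CohMaps A B C w) F F').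
  { intros s; exact (IH s (projT1 F' s) (dbr q s)). }
  exact (strans (s := Ext _ C) kF
           (strans (s := Ext _ C) (recst_ext w F F' FF')
              (ssym (s := Ext _ C) (projT2 (dnode q))))).
Qed.

End RecDefUnique.

Theorem lemma3p11 (A : setoid) (B : family A) (C : setoid) (aC : extfun (PB B C) C)
    (w : Wsetoid B) (k k' : extfun (ImS w) C) :
  RecDef aC w k -> RecDef aC w k' -> @eqv (Ext (ImS w) C) k k'.
Proof.
  intros p q; exact (RecDef_unique A B C aC (existT _ w k) p k' q).
Qed.
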